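(* For positive integers $n,m,k$ with $k<m<2k$, $$N_P(n,k,m)\ \ge\ \Bigl(2k-m+\frac{1}{\binom{m-1}{2k-m}}\Bigr)n.$$
   Context: Fix a finite field $\mathbb{F}_q$; $[n]=\{1,\dots,n\}$. An $(n,N,k,m)$-PIR array code over $\mathbb{F}_q$ is an $\mathbb{F}_q$-linear map $\mathcal{C}:\mathbf x\in\mathbb{F}_q^n\mapsto(\mathbf c_1,\dots,\mathbf c_m)$ with buckets $\mathbf c_\ell\in\mathbb{F}_q^{N_\ell}$, $N_\ell\ge1$ independent of $\mathbf x$, $\sum_\ell N_\ell=N$, such that for every $i\in[n]$ there is a partition of $[m]$ into $k$ sets $R_1,\dots,R_k$ such that for each $j$, $x_i$ is an $\mathbb{F}_q$-linear combination of values $f_\ell(\mathbf c_\ell)$, $\ell\in R_j$, for some linear functionals $f_\ell:\mathbb{F}_q^{N_\ell}\to\mathbb{F}_q$ (independent of $\mathbf x$). $N_P(n,k,m)$ denotes the minimum $N$ for which an $(n,N,k,m)$-PIR array code over $\mathbb{F}_q$ exists. *)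

From HB Require Import structures.
From mathcomp Require Import all_boot all_order all_algebra.
Set Implicit Arguments. Unset Strict Implicit. Unset Printing Implicit Defensive.
Import GRing.Theory.
Local Open Scope ring_scope.

(* The F-linear encoder x in F^n |-> (c_1, ..., c_m) is given bucketwise:
   bucket l (l : 'I_m) has size Ns l >= 1 and c_l = x *m G l, where
   G l : 'M[F]_(n, Ns l) (every F-linear map F^n -> F^(Ns l) is of this form).
   A linear functional f_l : F^(Ns l) -> F is c |-> (c *m v) 0 0, v : 'cV_(Ns l). *)
Definition is_PIR_code (F : finFieldType) (n k m : nat) (Ns : 'I_m -> nat)
    (G : forall l : 'I_m, 'M[F]_(n, Ns l)) : Prop :=
  (forall l, (0 < Ns l)%N) /\
  forall i : 'I_n, exists P : {set {set 'I_m}},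
    [/\ partition P [set: 'I_m], #|P| = k &
      forall R, R \in P ->
        exists (f : forall l : 'I_m, 'cV[F]_(Ns l)) (a : 'I_m -> F),
          forall x : 'rV[F]_n,
            x 0 i = \sum_(l in R) a l * (x *m G l *m f l) 0 0].

Definition has_PIR_code (F : finFieldType) (n N k m : nat) : Prop :=
  exists (Ns : 'I_m -> nat) (G : forall l : 'I_m, 'M[F]_(n, Ns l)),
    @is_PIR_code F n k m Ns G /\ (\sum_(l < m) Ns l)%N = N.

From mathcomp Require Import all_boot all_order all_algebra.
From mathcomp Require Import zify ring.
Set Implicit Arguments. Unset Strict Implicit. Unset Printing Implicit Defensive.
Import GRing.Theory Num.Theory.
Local Open Scope ring_scope.

(* Let V_l be the space of functionals of x readable from bucket l, S_l the
   set of coordinates e_j lying in V_l, and A_i = {l | e_i in V_l}.  In the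
   recovery partition for x_i every block is either of size >= 2 or a
   singleton inside A_i, so |A_i| >= t := 2k - m.  If |A_i| = t some block
   avoids A_i, so e_i lies in the sum of the V_l, l outside A_i; a rank count
   then shows that the number of such i with a given A_i = A is at most the
   total excess dim V_l - |S_l| over l outside A.  Summing over the
   C(m-1, t) sets A of size t avoiding a given l, and double counting
   sum_i |A_i| = sum_l |S_l|, gives
     N >= sum_l |S_l| + excess >= (t+1) n - n_t + n_t / C(m-1, t)
   where n_t <= n counts the i with |A_i| = t. *)

Lemma card_cover_meet (T : finType) (P : {set {set T}}) (A : {set T}) :
  partition P [set: T] -> #|A| = (\sum_(R in P) #|R :&: A|)%N.
Proof.
case/and3P => /eqP coverP trivP _.
rewrite -[A in LHS]setTI -coverP -sum1_card.
rewrite (eq_bigl (fun x => (x \in cover P) && (x \in A))) => [|x]; last by rewrite inE.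
rewrite (big_trivIset_cond _ trivP); apply: eq_bigr => R _.
by rewrite -sum1_card; apply: eq_bigl => x; rewrite inE.
Qed.

Lemma card_draws_avoiding (T : finType) (l : T) (t : nat) :
  #|[set A : {set T} | (l \notin A) && (#|A| == t)]| = 'C(#|T|.-1, t).
Proof.
rewrite -(cardsC1 l) -cards_draws; apply: eq_card => A; rewrite !inE.
by rewrite subsetC sub1set inE andbC.
Qed.

Lemma counting_bound (t B n n_t S D N : nat) : (0 < B)%N ->
  ((t + 1) * n <= S + n_t)%N -> (S + D <= N)%N -> (n_t <= B * D)%N ->
  (n_t <= n)%N -> ((t * B + 1) * n <= B * N)%N.
Proof. by move=> *; nia. Qed.

Section UnitSupport.
Variables (F : fieldType) (n : nat).

Definition unit_row (j : 'I_n) : 'rV[F]_n := delta_mx 0 j.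

Definition unit_support p (V : 'M[F]_(p, n)) := [set j | (unit_row j <= V)%MS].

Lemma card_unit_support_le_rank p (V : 'M[F]_(p, n)) :
  (#|unit_support V| <= \rank V)%N.
Proof.
set X := unit_support V.
pose E : 'M[F]_(#|X|, n) := \matrix_(r, c) (enum_val r == c)%:R.
have rowE r : row r E = unit_row (enum_val r).
  by apply/matrixP => a c; rewrite !mxE (ord1 a) eqxx eq_sym.
have EV : (E <= V)%MS.
  by apply/row_subP => r; rewrite rowE; have := enum_valP r; rewrite inE.
have EEt : E *m E^T = 1%:M.
  apply/matrixP => r s; rewrite !mxE (bigD1 (enum_val r)) //= big1.
    by rewrite !mxE eqxx mul1r addr0 (inj_eq enum_val_inj) eq_sym.
  by move=> c /negbTE ncr; rewrite !mxE eq_sym ncr mul0r.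
have := mxrankM_maxl E E^T; rewrite EEt mxrank1 => rankE.
exact: leq_trans rankE (mxrankS EV).
Qed.

Variables (I : eqType) (size_of : I -> nat) (V : forall l : I, 'M[F]_(size_of l, n)).

Lemma unit_support_sumsmx (s : seq I) :
  \bigcup_(l <- s) unit_support (V l) \subset
    unit_support (\sum_(l <- s) <<V l>>)%MS.
Proof.
elim: s => [|l s IHs]; first by rewrite big_nil sub0set.
rewrite !big_cons; apply/subsetP => j; rewrite in_setU !inE => /orP[jl | js].
  by apply: submx_trans (addsmxSl _ _); rewrite genmxE.
by apply: submx_trans (addsmxSr _ _); move/subsetP/(_ j js): IHs; rewrite inE.
Qed.

(* Subadditivity of the excess rank - |unit_support| over a sum of spaces. *)
Lemma rank_sumsmx_unit_support (s : seq I) :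
  (\rank (\sum_(l <- s) <<V l>>)%MS + \sum_(l <- s) #|unit_support (V l)| <=
     #|\bigcup_(l <- s) unit_support (V l)| + \sum_(l <- s) \rank (V l))%N.
Proof.
elim: s => [|l s IHs]; first by rewrite !big_nil mxrank0.
rewrite !big_cons.
set W := (\sum_(l <- s) <<V l>>)%MS in IHs *.
set U := \bigcup_(l <- s) unit_support (V l) in IHs *.
have rank_sum := mxrank_sum_cap <<V l>>%MS W; rewrite genmxE in rank_sum.
have card_union := cardsUI (unit_support (V l)) U.
have cap_le : (#|unit_support (V l) :&: U| <= \rank (<<V l>> :&: W)%MS)%N.
  apply: leq_trans (card_unit_support_le_rank _); apply: subset_leq_card.
  apply/subsetP => j; rewrite in_setI !inE sub_capmx genmxE => /andP[-> jU].
  by move/subsetP/(_ j jU): (unit_support_sumsmx s); rewrite inE.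
lia.
Qed.

End UnitSupport.

Section PIRCode.
Variables (F : finFieldType) (n k m : nat) (Ns : 'I_m -> nat).
Variable G : forall l : 'I_m, 'M[F]_(n, Ns l).
Hypothesis codeG : is_PIR_code k G.

Definition bucket_space l : 'M[F]_(Ns l, n) := (G l)^T.
Definition systematic l := unit_support (bucket_space l).
Definition holders i := [set l | i \in systematic l].
Definition excess l := (\rank (bucket_space l) - #|systematic l|)%N.

Lemma recovery_partition i : exists P : {set {set 'I_m}},
  [/\ partition P [set: 'I_m], #|P| = k &
    forall R, R \in P -> (unit_row F i <= \sum_(l in R) <<bucket_space l>>)%MS].
Proof.
case: codeG => _ /(_ i) [P [partP cardP recP]]; exists P; split=> // R RP.
have [f [a recR]] := recP R RP.
have -> : unit_row F i = \sum_(l in R) a l *: (G l *m f l)^T.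
  apply/matrixP => r c; rewrite (ord1 r) summxE !mxE.
  have := recR (delta_mx 0 c); rewrite !mxE /= eq_sym => ->.
  by apply: eq_bigr => l _; rewrite -mulmxA -rowE !mxE.
apply: summx_sub => l lR; apply: scalemx_sub.
by apply: (sumsmx_sup l lR); rewrite genmxE trmx_mul submxMl.
Qed.

Lemma card_holders_lower i : (2 * k <= m + #|holders i|)%N.
Proof.
have [P [partP cardP recP]] := recovery_partition i.
have cardm : m = (\sum_(R in P) #|R|)%N.
  by rewrite -(card_partition partP) cardsT card_ord.
suff : (2 * k <= \sum_(R in P) #|R| + #|holders i|)%N by rewrite -cardm.
rewrite (card_cover_meet (holders i) partP) -cardP -sum1_card big_distrr.
rewrite -big_split /=; apply: leq_sum => R RP; rewrite muln1.
have : R != set0 by apply/eqP => R0; case/and3P: partP => _ _; rewrite -R0 RP.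
rewrite -card_gt0 => R0.
have [R2 | R1] := ltnP 1 #|R|; first exact: leq_trans R2 (leq_addr _ _).
have /cards1P[l Rl] : #|R| == 1%N by rewrite eqn_leq R1 R0.
have := recP _ RP; rewrite Rl big_set1 genmxE => li.
by rewrite cards1 add1n ltnS card_gt0; apply/set0Pn; exists l; rewrite !inE eqxx.
Qed.

Lemma unit_row_sub_nonholders i : (#|holders i| < k)%N ->
  (unit_row F i <= \sum_(l in ~: holders i) <<bucket_space l>>)%MS.
Proof.
have [P [partP cardP recP]] := recovery_partition i.
have [R /andP[RP /eqP RA] | all_meet] :=
  pickP [pred R | (R \in P) && (R :&: holders i == set0)].
  move=> _; apply: submx_trans (recP R RP) _; apply/sumsmx_subP => l lR.
  have : l \notin R :&: holders i by rewrite RA inE.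
  by rewrite inE lR /= => lA; apply: (sumsmx_sup l) => //; rewrite in_setC.
move=> holders_lt_k; suff: (k <= #|holders i|)%N by rewrite leqNgt holders_lt_k.
rewrite (card_cover_meet (holders i) partP) -cardP -sum1_card.
apply: leq_sum => R RP; rewrite card_gt0.
by have := all_meet R; rewrite /= RP => /negbT.
Qed.

Lemma card_systematic_le_rank l : (#|systematic l| <= \rank (bucket_space l))%N.
Proof. exact: card_unit_support_le_rank. Qed.

Lemma card_holders_fibre (A : {set 'I_m}) : (#|A| < k)%N ->
  (#|[set i | holders i == A]| <= \sum_(l in ~: A) excess l)%N.
Proof.
move=> Ak.
have := rank_sumsmx_unit_support bucket_space (enum (~: A)).
have := unit_support_sumsmx bucket_space (enum (~: A)).
rewrite !big_enum /=.
set W := (\sum_(l in ~: A) <<bucket_space l>>)%MS.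
set U := \bigcup_(l in ~: A) systematic l.
set S := (\sum_(l in ~: A) #|systematic l|)%N.
set J := [set i | holders i == A] => UW rankW.
have UJ0 : U :&: J = set0.
  apply/setP => i; rewrite !inE; apply/negbTE/andP => -[/bigcupP[l lA il] /eqP iA].
  by move: lA; rewrite -iA !inE => /negP; apply; move: il; rewrite !inE.
have UJW : (#|U :|: J| <= \rank W)%N.
  apply: leq_trans (card_unit_support_le_rank W); apply: subset_leq_card.
  rewrite subUset UW /=; apply/subsetP => i; rewrite !inE => /eqP iA.
  by rewrite /W -iA; apply: unit_row_sub_nonholders; rewrite iA.
have rank_split : (\sum_(l in ~: A) \rank (bucket_space l) =
    S + \sum_(l in ~: A) excess l)%N.
  rewrite -big_split /=; apply: eq_bigr => l _.
  by rewrite /excess subnKC ?card_systematic_le_rank.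
have cardUJ := cardsUI U J; rewrite UJ0 cards0 addn0 in cardUJ.
rewrite rank_split addnCA (addnC (\rank W)) leq_add2l in rankW.
by rewrite -(leq_add2l #|U|) -cardUJ (leq_trans UJW).
Qed.

Let t := (2 * k - m)%N.
Let n_t := #|[set i | #|holders i| == t]|.

Lemma sum_card_holders :
  (\sum_(i < n) #|holders i| = \sum_(l < m) #|systematic l|)%N.
Proof.
under eq_bigr do rewrite -sum1_card big_mkcond.
under [RHS]eq_bigr do rewrite -sum1_card big_mkcond.
by rewrite exchange_big; apply: eq_bigr => l _; apply: eq_bigr => i _; rewrite inE.
Qed.

Lemma sum_card_holders_lower :
  ((t + 1) * n <= \sum_(i < n) #|holders i| + n_t)%N.
Proof.
rewrite /n_t -sum1_card [X in (_ <= _ + X)%N]big_mkcond -big_split /=.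
have -> : ((t + 1) * n = \sum_(i < n) (t + 1))%N by rewrite sum_nat_const card_ord mulnC.
apply: leq_sum => i _; rewrite inE.
have := card_holders_lower i; rewrite /t; case: eqP => /=; lia.
Qed.

Lemma sum_systematic_excess :
  (\sum_(l < m) #|systematic l| + \sum_(l < m) excess l <= \sum_(l < m) Ns l)%N.
Proof.
rewrite -big_split /=; apply: leq_sum => l _.
by rewrite /excess subnKC ?card_systematic_le_rank // rank_leq_row.
Qed.

Lemma card_minimal_holders_le : (0 < k)%N -> (k < m)%N ->
  (n_t <= 'C(m.-1, t) * \sum_(l < m) excess l)%N.
Proof.
move=> k0 km.
have -> : n_t = (\sum_(A : {set 'I_m} | #|A| == t) #|[set i | holders i == A]|)%N.
  rewrite /n_t -sum1_card (partition_big holders (fun A => #|A| == t)) /=.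
    apply: eq_bigr => A /eqP At; rewrite -sum1_card; apply: eq_bigl => i.
    by rewrite !inE; case: (holders i =P A) => [-> | _]; rewrite ?At ?eqxx ?andbF.
  by move=> i; rewrite inE.
apply: (@leq_trans (\sum_(A : {set 'I_m} | #|A| == t) \sum_(l in ~: A) excess l)).
  by apply: leq_sum => A /eqP At; apply: card_holders_fibre; rewrite At /t; lia.
rewrite (exchange_big_dep xpredT) //= big_distrr; apply: eq_leq.
apply: eq_bigr => l _; rewrite sum_nat_const; congr (_ * _)%N.
rewrite -[m in 'C(m.-1, _)]card_ord -(card_draws_avoiding l).
by apply: eq_card => A; rewrite unfold_in !inE andbC.
Qed.

End PIRCode.

Lemma PIR_code_length_bound (F : finFieldType) (n k m : nat) (Ns : 'I_m -> nat)
    (G : forall l : 'I_m, 'M[F]_(n, Ns l)) :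
  is_PIR_code k G -> (0 < k)%N -> (k < m)%N ->
  (((2 * k - m) * 'C(m.-1, 2 * k - m) + 1) * n <=
     'C(m.-1, 2 * k - m) * \sum_(l < m) Ns l)%N.
Proof.
move=> codeG k0 km.
apply: (counting_bound (D := \sum_(l < m) excess G l) _
          (sum_card_holders_lower codeG)).
- by rewrite bin_gt0; lia.
- by rewrite sum_card_holders; apply: sum_systematic_excess.
- exact: card_minimal_holders_le.
- by rewrite -[n in (_ <= n)%N]card_ord max_card.
Qed.

Theorem theorem3p2 (F : finFieldType) (n k m N : nat) :
  (0 < n)%N -> (0 < k)%N -> (k < m)%N -> (m < 2 * k)%N ->
  has_PIR_code F n N k m ->
  (((2 * k - m)%N)%:R + 1 / ('C(m.-1, 2 * k - m))%:R) * n%:R <= (N%:R : rat).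
Proof.
move=> _ k0 km _ [Ns [G [codeG <-]]].
have := PIR_code_length_bound codeG k0 km.
set B := 'C(_, _); set t := (2 * k - m)%N => bound.
have B0 : (0 < B)%N by rewrite bin_gt0; lia.
have -> : ((t%:R + 1 / B%:R) * n%:R : rat) = ((t * B + 1) * n)%:R / B%:R.
  by rewrite natrM natrD natrM; field; rewrite pnatr_eq0 -lt0n.
by rewrite ler_pdivrMr ?ltr0n // -natrM ler_nat [X in (_ <= X)%N]mulnC.
Qed.
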